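(* For each integer $A\ge2$ the series $u(z)=\operatorname{Re}\sum_{k=0}^\infty A^kz^{2^{A^k}}$ converges in $\mathbf D$ and there is a constant $C$ with $|u(z)|\le C\log\frac{e}{1-|z|}$ for all $z\in\mathbf D$.
   Context: $\mathbf D$ is the open unit disc. *)

From Stdlib Require Import Reals.
From Coquelicot Require Import Coquelicot.
Open Scope R_scope.

Definition lac_term (A : nat) (z : C) (k : nat) : C :=
  Cmult (RtoC (INR (A ^ k))) (pow_n z (2 ^ (A ^ k))).

(** Put [r = |z|].  The modulus of the [k]-th term is [A^k r^(2^(A^k))], and since
    [A^k - A^(k-1) >= A^k / 2] it is at most twice the sum of [r^(2^j)] over the block
    [A^(k-1) < j <= A^k].  Hence every partial sum of the moduli is bounded by
    [2 sum_(j <= J) r^(2^j)] for some [J].  Finally [1 + y >= exp (y/2)] on [[0,1]] and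
    the telescoping product [(1 - r) prod_(j <= J) (1 + r^(2^j)) = 1 - r^(2^(J+1))] give
    [sum_(j <= J) r^(2^j) <= 2 ln (1 / (1 - r))]. *)

From Stdlib Require Import Reals Lra Lia Psatz.
From Coquelicot Require Import Coquelicot.
Open Scope R_scope.

Lemma pow_unit_interval (r : R) (n : nat) : 0 <= r <= 1 -> 0 <= r ^ n <= 1.
Proof.
  intros Hr; split; [apply pow_le; lra|].
  rewrite <- (pow1 n); apply pow_incr; lra.
Qed.

Lemma Rle_pow_le1 (r : R) (m n : nat) : 0 <= r <= 1 -> (m <= n)%nat -> r ^ n <= r ^ m.
Proof.
  intros Hr Hmn; replace n with (m + (n - m))%nat by lia.
  rewrite pow_add.
  destruct (pow_unit_interval r m Hr), (pow_unit_interval r (n - m) Hr).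
  nra.
Qed.

Definition dyadic_pow (r : R) (j : nat) : R := r ^ (2 ^ j).

Definition dyadic_sum (r : R) (n : nat) : R := sum_f_R0 (dyadic_pow r) n.

Definition lac_norm (A : nat) (r : R) (k : nat) : R := INR (A ^ k) * dyadic_pow r (A ^ k).

Lemma dyadic_pow_S (r : R) (j : nat) : dyadic_pow r (S j) = dyadic_pow r j * dyadic_pow r j.
Proof. unfold dyadic_pow; rewrite Nat.pow_succ_r', Nat.mul_comm, pow_mult; ring. Qed.

Section UnitInterval.

Variable r : R.
Hypothesis r_unit : 0 <= r <= 1.

Lemma dyadic_pow_unit (j : nat) : 0 <= dyadic_pow r j <= 1.
Proof. exact (pow_unit_interval r _ r_unit). Qed.

Lemma dyadic_pow_antimono (j k : nat) : (j <= k)%nat -> dyadic_pow r k <= dyadic_pow r j.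
Proof. intros Hjk; apply Rle_pow_le1; [exact r_unit|]; apply Nat.pow_le_mono_r; lia. Qed.

Lemma dyadic_sum_add_block (m d : nat) :
  dyadic_sum r m + INR d * dyadic_pow r (m + d) <= dyadic_sum r (m + d).
Proof.
  induction d as [|d IH].
  - rewrite Nat.add_0_r; simpl; lra.
  - rewrite Nat.add_succ_r, S_INR; unfold dyadic_sum in *; simpl sum_f_R0.
    assert (Hdec : dyadic_pow r (S (m + d)) <= dyadic_pow r (m + d))
      by (apply dyadic_pow_antimono; lia).
    pose proof (pos_INR d) as Hd.
    pose proof (dyadic_pow_unit (S (m + d))) as Hx.
    nra.
Qed.

Lemma lac_norm_sum_le_dyadic_sum (A K : nat) : (2 <= A)%nat ->
  sum_f_R0 (lac_norm A r) K <= 2 * dyadic_sum r (A ^ K).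
Proof.
  intros HA; induction K as [|K IH].
  - unfold lac_norm, dyadic_sum, dyadic_pow; simpl.
    pose proof (pow_unit_interval r 1 r_unit); simpl; nra.
  - simpl sum_f_R0.
    set (d := (A ^ S K - A ^ K)%nat).
    pose proof (dyadic_sum_add_block (A ^ K) d) as Hblock.
    replace (A ^ K + d)%nat with (A ^ S K)%nat in Hblock by (unfold d; simpl; nia).
    assert (Hhalf : INR (A ^ S K) <= 2 * INR d).
    { change 2 with (INR 2); rewrite <- mult_INR; apply le_INR; unfold d; simpl; nia. }
    pose proof (dyadic_pow_unit (A ^ S K)) as Hx.
    unfold lac_norm at 2; nra.
Qed.

End UnitInterval.

Lemma exp_half_le (y : R) : 0 <= y <= 1 -> exp (y / 2) <= 1 + y.
Proof.
  intros Hy.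
  assert (Hinv : exp (y / 2) * exp (- (y / 2)) = 1)
    by (rewrite <- exp_plus, Rplus_opp_r; apply exp_0).
  pose proof (exp_ineq1_le (- (y / 2))).
  pose proof (exp_pos (y / 2)).
  nra.
Qed.

Lemma exp_dyadic_sum_le (r : R) (J : nat) : 0 <= r < 1 ->
  exp (dyadic_sum r J / 2) * (1 - r) <= 1 - dyadic_pow r (S J).
Proof.
  intros Hr; assert (Hr' : 0 <= r <= 1) by lra.
  induction J as [|J IH].
  - unfold dyadic_sum; simpl sum_f_R0; rewrite dyadic_pow_S.
    unfold dyadic_pow; simpl; rewrite Rmult_1_r.
    pose proof (exp_half_le r Hr'); nra.
  - unfold dyadic_sum in *; simpl sum_f_R0.
    rewrite Rdiv_plus_distr, exp_plus, (dyadic_pow_S r (S J)).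
    pose proof (dyadic_pow_unit r Hr' (S J)) as Hx.
    pose proof (exp_half_le (dyadic_pow r (S J)) Hx).
    pose proof (exp_pos (dyadic_pow r (S J) / 2)).
    pose proof (exp_pos (sum_f_R0 (dyadic_pow r) J / 2)).
    nra.
Qed.

Lemma dyadic_sum_le_ln (r : R) (J : nat) : 0 <= r < 1 ->
  dyadic_sum r J <= 2 * ln (1 / (1 - r)).
Proof.
  intros Hr.
  pose proof (exp_dyadic_sum_le r J Hr) as Hprod.
  pose proof (dyadic_pow_unit r ltac:(lra) (S J)) as Hx.
  assert (Hexp : exp (dyadic_sum r J / 2) <= 1 / (1 - r)).
  { apply (Rmult_le_reg_r (1 - r)); [lra|].
    unfold Rdiv; rewrite Rmult_assoc, Rinv_l; lra. }
  apply ln_le in Hexp; [|apply exp_pos].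
  rewrite ln_exp in Hexp; lra.
Qed.

Lemma lac_norm_sum_le_ln (A : nat) (r : R) (K : nat) : (2 <= A)%nat -> 0 <= r < 1 ->
  sum_f_R0 (lac_norm A r) K <= 4 * ln (exp 1 / (1 - r)).
Proof.
  intros HA Hr.
  pose proof (lac_norm_sum_le_dyadic_sum r ltac:(lra) A K HA).
  pose proof (dyadic_sum_le_ln r (A ^ K) Hr).
  assert (ln (1 / (1 - r)) <= ln (exp 1 / (1 - r))).
  { apply ln_le; [apply Rdiv_lt_0_compat; lra|].
    apply Rmult_le_compat_r; [left; apply Rinv_0_lt_compat; lra|].
    pose proof (exp_ineq1_le 1); lra. }
  lra.
Qed.

Lemma Cmod_pow_n (z : C) (n : nat) : Cmod (pow_n z n) = Cmod z ^ n.
Proof.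
  induction n as [|n IH]; simpl.
  - apply Cmod_1.
  - change (mult z (pow_n z n)) with (Cmult z (pow_n z n)).
    rewrite Cmod_mult, IH; reflexivity.
Qed.

Lemma norm_lac_term (A : nat) (z : C) (k : nat) :
  norm (lac_term A z k) = lac_norm A (Cmod z) k.
Proof.
  change (Cmod (lac_term A z k) = lac_norm A (Cmod z) k).
  unfold lac_term, lac_norm, dyadic_pow.
  rewrite Cmod_mult, Cmod_R, Cmod_pow_n, Rabs_pos_eq; [reflexivity|apply pos_INR].
Qed.

Lemma ex_series_of_bounded_norm_sums {K : AbsRing} {V : CompleteNormedModule K}
  (a : nat -> V) (M : R) :
  (forall n, sum_n (fun k => norm (a k)) n <= M) -> ex_series a.
Proof.
  intros Hbound.
  apply (ex_series_le a (fun k => norm (a k))); [intros; apply Rle_refl|].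
  destruct (ex_finite_lim_seq_incr (sum_n (fun k => norm (a k))) M) as [l Hl];
    [|exact Hbound|exists l; exact Hl].
  intros n; rewrite sum_Sn; pose proof (norm_ge_0 (a (S n))).
  change (plus ?x ?y) with (x + y); lra.
Qed.

Lemma norm_series_le {K : AbsRing} {V : NormedModule K} (a : nat -> V) (s : V) (M : R) :
  is_series a s -> (forall n, sum_n (fun k => norm (a k)) n <= M) -> norm s <= M.
Proof.
  intros Hs Hbound.
  change (Rbar_le (norm s) M).
  apply (is_lim_seq_le (fun n => norm (sum_n a n)) (fun _ => M)).
  - intros n; eapply Rle_trans; [apply norm_sum_n_m|apply Hbound].
  - eapply filterlim_comp; [exact Hs|apply filterlim_norm].
  - apply is_lim_seq_const.
Qed.

Theorem lemma9 (A : nat) (hA : (2 <= A)%nat) :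
  (forall z : C, Cmod z < 1 -> ex_series (lac_term A z)) /\
  exists Cst : R, forall z : C, Cmod z < 1 ->
    forall s : C, is_series (lac_term A z) s ->
      Rabs (Re s) <= Cst * ln (exp 1 / (1 - Cmod z)).
Proof.
  assert (Hpartial : forall z : C, Cmod z < 1 -> forall n,
      sum_n (fun k => norm (lac_term A z k)) n <= 4 * ln (exp 1 / (1 - Cmod z))).
  { intros z Hz n.
    rewrite (sum_n_ext _ _ _ (norm_lac_term A z)), sum_n_Reals.
    apply lac_norm_sum_le_ln; [exact hA|split; [apply Cmod_ge_0|exact Hz]]. }
  split.
  - intros z Hz; exact (ex_series_of_bounded_norm_sums _ _ (Hpartial z Hz)).
  - exists 4; intros z Hz s Hs.
    eapply Rle_trans; [apply re_le_Cmod|].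
    exact (norm_series_le _ s _ Hs (Hpartial z Hz)).
Qed.
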